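(* Let $P:\mathcal{C}^{\mathrm{op}}\to\mathbf{Hey}$ be a Gödel hyperdoctrine. Let $A,B$ be objects of $\mathcal{C}$, $\beta\in P(A\times B)$, and let $\alpha\in P(A)$ be existential-free. If \[ a:A\;|\;\top\vdash\alpha(a)\rightarrow\exists b.\beta(a,b),\] then \[ a:A\;|\;\top\vdash\exists b.(\alpha(a)\rightarrow\beta(a,b)).\]
   Context: A hyperdoctrine is a functor $P:\mathcal{C}^{\mathrm{op}}\to\mathbf{Hey}$ from a cartesian closed category $\mathcal{C}$ to Heyting algebras such that for every arrow $f:A\to B$ the homomorphism $P_f:P(B)\to P(A)$ has a left adjoint $\exists_f$ and a right adjoint $\forall_f$ satisfying the Beck–Chevalley conditions. A Gödel hyperdoctrine is a hyperdoctrine which (viewed as a functor to $\mathbf{Pos}$) is a Gödel doctrine. A doctrine $P:\mathcal{C}^{\mathrm{op}}\to\mathbf{Pos}$ ($\mathcal{C}$ with finite products) is existential/universal if reindexing along each product projection $\pi$ has a left adjoint $\exists_\pi$ / right adjoint $\forall_\pi$ satisfying Beck–Chevalley along pullbacks of projections. Notation: $a:A\;|\;\phi\vdash\psi$ means $\phi\le\psi$ in $P(A)$; $\exists b.\psi(a,b)=\exists_{\pi_A}\psi$, $\forall b.\psi(a,b)=\forall_{\pi_A}\psi$; $\top,\rightarrow$ are the Heyting operations in the fibre; substitution is reindexing. In an existential doctrine, $\alpha\in P(A)$ is an existential splitting if for every $B$ and $\beta\in P(A\times B)$ with $\alpha\le\exists_{\pi_A}\beta$ there is $g:A\to B$ with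 $\alpha\le P_{\langle1_A,g\rangle}\beta$; $\alpha\in P(I)$ is existential-free if $P_f\alpha$ is an existential splitting for every $f:A\to I$. In a universal doctrine $Q$, $\alpha\in Q(I)$ is universal-free if for every $f:A\to I$, every $B$ and every $\beta\in Q(A\times B)$ with $\forall_{\pi_A}\beta\le Q_f\alpha$ there is $g:A\to B$ with $Q_{\langle1_A,g\rangle}\beta\le Q_f\alpha$. Enough existential-free (universal-free) predicates: every $\alpha\in P(I)$ equals $\exists_{\pi_I}\beta$ (resp. $\forall_{\pi_I}\beta$) for some $A$ and existential-free (universal-free) $\beta\in P(I\times A)$. A Gödel doctrine: (1) $\mathcal{C}$ cartesian closed; (2) $P$ existential and universal; (3) $P$ has enough existential-free predicates; (4) existential-free predicates are stable under $\forall_\pi$ for projections $\pi$; (5) the sub-doctrine $P'$ of existential-free predicates has enough universal-free predicates. *)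

Record Category := {
  Ob : Type;
  Hom : Ob -> Ob -> Type;
  idm : forall A, Hom A A;
  comp : forall A B D, Hom B D -> Hom A B -> Hom A D;
  comp_id_l : forall A B (f : Hom A B), comp A B B (idm B) f = f;
  comp_id_r : forall A B (f : Hom A B), comp A A B f (idm A) = f;
  comp_assoc : forall A B D E (f : Hom A B) (g : Hom B D) (h : Hom D E),
      comp A D E h (comp A B D g f) = comp A B E (comp B D E h g) f
}.
Arguments Hom {c} A B.
Arguments idm {c} A.
Arguments comp {c A B D} g f.

Record CCCat := {
  cat :> Category;
  terminal : Ob cat;
  to_term : forall A : Ob cat, Hom A terminal;
  to_term_unique : forall A (f : Hom A terminal), f = to_term A;
  prod : Ob cat -> Ob cat -> Ob cat;
  pi1 : forall A B, Hom (prod A B) A;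
  pi2 : forall A B, Hom (prod A B) B;
  pair : forall X A B, Hom X A -> Hom X B -> Hom X (prod A B);
  pi1_pair : forall X A B (f : Hom X A) (g : Hom X B), comp (pi1 A B) (pair X A B f g) = f;
  pi2_pair : forall X A B (f : Hom X A) (g : Hom X B), comp (pi2 A B) (pair X A B f g) = g;
  pair_unique : forall X A B (f : Hom X A) (g : Hom X B) (h : Hom X (prod A B)),
      comp (pi1 A B) h = f -> comp (pi2 A B) h = g -> h = pair X A B f g;
  expo : Ob cat -> Ob cat -> Ob cat;        (* expo B D = D^B *)
  ev : forall B D, Hom (prod (expo B D) B) D;
  curry : forall X B D, Hom (prod X B) D -> Hom X (expo B D);
  ev_curry : forall X B D (f : Hom (prod X B) D),
      comp (ev B D) (pair (prod X B) (expo B D) B (comp (curry X B D f) (pi1 X B)) (pi2 X B)) = f;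
  curry_unique : forall X B D (f : Hom (prod X B) D) (h : Hom X (expo B D)),
      comp (ev B D) (pair (prod X B) (expo B D) B (comp h (pi1 X B)) (pi2 X B)) = f -> h = curry X B D f
}.
Arguments terminal {c}.
Arguments to_term {c} A.
Arguments prod {c} A B.
Arguments pi1 {c} A B.
Arguments pi2 {c} A B.
Arguments pair {c X A B} f g.
Arguments expo {c} B D.
Arguments ev {c} B D.
Arguments curry {c X B D} f.

(** Pullback squares:
<<
      A' --g'--> A
      |          |
      f'         f
      v          v
      B' --g---> B
>>  *)
Definition is_pullback {C : Category} {A B B' A' : Ob C}
    (f : Hom A B) (g : Hom B' B) (g' : Hom A' A) (f' : Hom A' B') : Prop :=
  comp f g' = comp g f' /\
  forall (X : Ob C) (h : Hom X A) (k : Hom X B'), comp f h = comp g k ->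
    exists u : Hom X A',
      (comp g' u = h /\ comp f' u = k) /\
      forall v : Hom X A', comp g' v = h -> comp f' v = k -> v = u.

Record HeyDoctrine (C : CCCat) := {
  Pr :> Ob C -> Type;
  le : forall A, Pr A -> Pr A -> Prop;
  top : forall A, Pr A;
  bot : forall A, Pr A;
  meet : forall A, Pr A -> Pr A -> Pr A;
  join : forall A, Pr A -> Pr A -> Pr A;
  impl : forall A, Pr A -> Pr A -> Pr A;
  le_refl : forall A (x : Pr A), le A x x;
  le_trans : forall A (x y z : Pr A), le A x y -> le A y z -> le A x z;
  le_antisym : forall A (x y : Pr A), le A x y -> le A y x -> x = y;
  le_top : forall A (x : Pr A), le A x (top A);
  bot_le : forall A (x : Pr A), le A (bot A) x;
  meet_glb : forall A (x y z : Pr A), le A z (meet A x y) <-> (le A z x /\ le A z y);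
  join_lub : forall A (x y z : Pr A), le A (join A x y) z <-> (le A x z /\ le A y z);
  impl_adj : forall A (x y z : Pr A), le A z (impl A x y) <-> le A (meet A z x) y;
  reindex : forall A B, Hom A B -> Pr B -> Pr A;
  reindex_id : forall A (x : Pr A), reindex A A (idm A) x = x;
  reindex_comp : forall A B D (f : Hom A B) (g : Hom B D) (x : Pr D),
      reindex A D (comp g f) x = reindex A B f (reindex B D g x);
  reindex_mono : forall A B (f : Hom A B) (x y : Pr B),
      le B x y -> le A (reindex A B f x) (reindex A B f y);
  reindex_top : forall A B (f : Hom A B), reindex A B f (top B) = top A;
  reindex_bot : forall A B (f : Hom A B), reindex A B f (bot B) = bot A;
  reindex_meet : forall A B (f : Hom A B) (x y : Pr B),
      reindex A B f (meet B x y) = meet A (reindex A B f x) (reindex A B f y);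
  reindex_join : forall A B (f : Hom A B) (x y : Pr B),
      reindex A B f (join B x y) = join A (reindex A B f x) (reindex A B f y);
  reindex_impl : forall A B (f : Hom A B) (x y : Pr B),
      reindex A B f (impl B x y) = impl A (reindex A B f x) (reindex A B f y)
}.
Arguments Pr {C} h A.
Arguments le {C h A} x y.
Arguments top {C h} A.
Arguments bot {C h} A.
Arguments meet {C h A} x y.
Arguments join {C h A} x y.
Arguments impl {C h A} x y.
Arguments reindex {C h A B} f x.

Record Hyperdoctrine (C : CCCat) := {
  hd :> HeyDoctrine C;
  ex : forall A B (f : Hom A B), hd A -> hd B;
  all : forall A B (f : Hom A B), hd A -> hd B;
  ex_adj : forall A B (f : Hom A B) (x : hd A) (y : hd B),
      le (ex A B f x) y <-> le x (reindex f y);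
  all_adj : forall A B (f : Hom A B) (x : hd A) (y : hd B),
      le y (all A B f x) <-> le (reindex f y) x;
  ex_BC : forall A B B' A' (f : Hom A B) (g : Hom B' B) (g' : Hom A' A) (f' : Hom A' B'),
      is_pullback f g g' f' -> forall x : hd A,
      reindex g (ex A B f x) = ex A' B' f' (reindex g' x);
  all_BC : forall A B B' A' (f : Hom A B) (g : Hom B' B) (g' : Hom A' A) (f' : Hom A' B'),
      is_pullback f g g' f' -> forall x : hd A,
      reindex g (all A B f x) = all A' B' f' (reindex g' x)
}.
Arguments ex {C h A B} f x.
Arguments all {C h A B} f x.

Section Godel.
Context {C : CCCat} (P : Hyperdoctrine C).

Definition exP {A B : Ob C} (b : P (prod A B)) : P A := ex (pi1 A B) b.
Definition allP {A B : Ob C} (b : P (prod A B)) : P A := all (pi1 A B) b.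

Definition existential_splitting {A : Ob C} (a : P A) : Prop :=
  forall (B : Ob C) (b : P (prod A B)), le a (exP b) ->
    exists g : Hom A B, le a (reindex (pair (idm A) g) b).

Definition existential_free {I : Ob C} (a : P I) : Prop :=
  forall (A : Ob C) (f : Hom A I), existential_splitting (reindex f a).

Definition enough_existential_free : Prop :=
  forall (I : Ob C) (a : P I), exists (A : Ob C) (b : P (prod I A)),
    existential_free b /\ a = exP b.

Definition existential_free_stable_forall : Prop :=
  forall (I A : Ob C) (b : P (prod I A)), existential_free b -> existential_free (allP b).

(** Universal-free elements of the sub-doctrine P' of existential-free
    predicates (its fibres are the existential-free elements, its order,
    reindexing and ∀_π are those of P). *)
Definition universal_free' {I : Ob C} (a : P I) : Prop :=
  forall (A : Ob C) (f : Hom A I) (B : Ob C) (b : P (prod A B)),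
    existential_free b ->
    le (allP b) (reindex f a) ->
    exists g : Hom A B, le (reindex (pair (idm A) g) b) (reindex f a).

Definition enough_universal_free' : Prop :=
  forall (I : Ob C) (a : P I), existential_free a ->
    exists (A : Ob C) (b : P (prod I A)),
      existential_free b /\ universal_free' b /\ a = allP b.

(** Gödel hyperdoctrine: conditions (1) and (2) are built into
    [CCCat] and [Hyperdoctrine]. *)
Definition Godel_hyperdoctrine : Prop :=
  enough_existential_free /\ existential_free_stable_forall /\ enough_universal_free'.

End Godel.

(* Instantiating the existential-freeness of [alpha] at the identity, the
   hypothesis [alpha |- exists b. beta] yields a term [g : A -> B] with
   [alpha |- beta(a, g a)].  Then [alpha -> beta(a, g a)] holds, and it is the
   instance at [b := g a] of [alpha -> beta(a, b)], hence below its existential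
   quantification. *)

Section HeytingFibre.
Context {C : CCCat} (P : HeyDoctrine C).

Lemma top_le_impl (A : Ob C) (x y : P A) : le (top A) (impl x y) <-> le x y.
Proof.
  assert (Hmeet : meet (top A) x = x).
  { apply (le_antisym _ P).
    - exact (proj2 (proj1 (meet_glb _ P _ _ _ _) (le_refl _ P _ _))).
    - apply (meet_glb _ P); split; [apply le_top | apply le_refl]. }
  split; intros Hle.
  - rewrite <- Hmeet. now apply (impl_adj _ P).
  - apply (impl_adj _ P). now rewrite Hmeet.
Qed.

Lemma reindex_pair_pi1 (A B : Ob C) (g : Hom A B) (x : P A) :
  reindex (pair (idm A) g) (reindex (pi1 A B) x) = x.
Proof. now rewrite <- (reindex_comp _ P), pi1_pair, (reindex_id _ P). Qed.

End HeytingFibre.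

Section ExistentialQuantifier.
Context {C : CCCat} (P : Hyperdoctrine C).

Lemma reindex_pair_le_exP (A B : Ob C) (g : Hom A B) (b : P (prod A B)) :
  le (reindex (pair (idm A) g) b) (exP P b).
Proof.
  assert (Hunit : le b (reindex (pi1 A B) (exP P b))).
  { apply (ex_adj C P), le_refl. }
  apply (reindex_mono _ P _ _ (pair (idm A) g)) in Hunit.
  now rewrite reindex_pair_pi1 in Hunit.
Qed.

Lemma existential_free_splitting (A : Ob C) (a : P A) :
  existential_free P a -> existential_splitting P a.
Proof.
  intros Hfree.
  specialize (Hfree A (idm A)).
  now rewrite (reindex_id _ P) in Hfree.
Qed.

End ExistentialQuantifier.

Theorem theorem5 (C : CCCat) (P : Hyperdoctrine C) (HG : Godel_hyperdoctrine P)
  (A B : Ob C) (beta : P (prod A B)) (alpha : P A)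
  (Halpha : existential_free P alpha)
  (H : le (top A) (impl alpha (exP P beta))) :
  le (top A) (exP P (impl (reindex (pi1 A B) alpha) beta)).
Proof.
  apply (top_le_impl P A alpha) in H.
  destruct (existential_free_splitting P A alpha Halpha B beta H) as [g Hg].
  eapply le_trans; [| apply (reindex_pair_le_exP P A B g)].
  rewrite (reindex_impl _ P), reindex_pair_pi1.
  now apply (top_le_impl P).
Qed.
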